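(* Let $F$, $H$, $X$, $\Omega$, $Q$ and the sequences generated by the IneIREG method be as described in the context, and suppose $H$ is $\mu$-strongly monotone for some $\mu>0$. Then for all $x\in X$ and $k\ge0$, $$\|w_k-x\|^2-\|x_{k+1}-x\|^2\ge(1-\lambda_k^2L_k^2)\|w_k-y_k\|^2+2\lambda_k\langle F(x),y_k-x\rangle+2\lambda_k\eta_k\langle H(x),y_k-x\rangle+2\lambda_k\eta_k\mu\|y_k-x\|^2,$$ where $L_k:=L_F+\eta_kL_H$.
   Context: Work in $\mathbb{R}^n$ with Euclidean inner product $\langle\cdot,\cdot\rangle$ and norm $\|\cdot\|$. The maps $F\colon \mathrm{Dom}\,F\to\mathbb{R}^n$ and $H\colon\mathrm{Dom}\,H\to\mathbb{R}^n$ are monotone and Lipschitz continuous with constants $L_F>0$ and $L_H>0$; $H$ is $\mu$-strongly monotone means $\langle H(x)-H(y),x-y\rangle\ge\mu\|x-y\|^2$ for all $x,y\in\mathrm{Dom}\,H$. $X$ is a nonempty compact convex set and $\Omega$ a nonempty closed convex set with $X\subset\Omega\subset\mathrm{Dom}\,F\cap\mathrm{Dom}\,H$; $P_X,P_\Omega$ denote orthogonal projections. $Q:=\{x\in X:\langle F(x),y-x\rangle\ge0\ \forall y\in X\}$ is assumed nonempty. IneIREG method: start with $x_0=x_{-1}\in X$; for $k=0,1,\dots$, with parameters $\alpha_k\ge0$, $\lambda_k>0$, $\eta_k>0$, set $w_k=x_k+\alpha_k(x_k-x_{k-1})$, $w'_k=P_\Omega(w_k)$, $y_k=P_X\big(w_k-\lambda_k(F(w'_k)+\eta_kH(w'_k))\big)$,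 $x_{k+1}=P_X\big(w_k-\lambda_k(F(y_k)+\eta_kH(y_k))\big)$. *)

From HB Require Import structures.
From mathcomp Require Import all_boot all_order all_algebra.
From mathcomp Require Import all_classical all_reals all_analysis.
From mathcomp Require Import matrix_topology matrix_normedtype.
Import numFieldNormedType.Exports.
Set Implicit Arguments. Unset Strict Implicit. Unset Printing Implicit Defensive.
Import Order.TTheory GRing.Theory Num.Theory.
Local Open Scope ring_scope.
Local Open Scope classical_set_scope.

Definition vdot (R : realType) (n : nat) (u v : 'rV[R]_n) : R :=
  \sum_(i < n) u ord0 i * v ord0 i.

Definition vnorm (R : realType) (n : nat) (u : 'rV[R]_n) : R :=
  Num.sqrt (vdot u u).

Definition vconvex_set (R : realType) (n : nat) (C : set 'rV[R]_n) : Prop :=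
  forall x y (t : R), C x -> C y -> 0 <= t <= 1 -> C ((1 - t) *: x + t *: y).

Definition op_monotone_on (R : realType) (n : nat) (D : set 'rV[R]_n)
    (G : 'rV[R]_n -> 'rV[R]_n) : Prop :=
  forall x y, D x -> D y -> 0 <= vdot (G x - G y) (x - y).

Definition op_strongly_monotone_on (R : realType) (n : nat) (D : set 'rV[R]_n)
    (G : 'rV[R]_n -> 'rV[R]_n) (mu : R) : Prop :=
  forall x y, D x -> D y -> mu * (vnorm (x - y)) ^+ 2 <= vdot (G x - G y) (x - y).

Definition op_lipschitz_on (R : realType) (n : nat) (D : set 'rV[R]_n)
    (G : 'rV[R]_n -> 'rV[R]_n) (L : R) : Prop :=
  forall x y, D x -> D y -> vnorm (G x - G y) <= L * vnorm (x - y).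

Definition is_proj_onto (R : realType) (n : nat) (C : set 'rV[R]_n)
    (P : 'rV[R]_n -> 'rV[R]_n) : Prop :=
  forall y, C (P y) /\ forall z, C z -> vnorm (y - P y) <= vnorm (y - z).

Definition VIsol (R : realType) (n : nat) (F : 'rV[R]_n -> 'rV[R]_n)
    (X : set 'rV[R]_n) : set 'rV[R]_n :=
  [set x | X x /\ forall y, X y -> 0 <= vdot (F x) (y - x)].

From HB Require Import structures.
From mathcomp Require Import all_boot all_order all_algebra.
From mathcomp Require Import all_classical all_reals all_analysis.
From mathcomp Require Import matrix_topology matrix_normedtype.
From mathcomp Require Import ring lra.
Import numFieldNormedType.Exports.
Import Order.TTheory GRing.Theory Num.Theory.
Local Open Scope ring_scope.
Local Open Scope classical_set_scope.
Set Implicit Arguments. Unset Strict Implicit.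

(* With G := F + eta_k H the two projections of the method form an extragradient
   step for G.  The variational inequalities characterising
   y_k = P_X(w_k - lam_k G(w'_k)) and x_{k+1} = P_X(w_k - lam_k G(y_k)) give
     |w_k - z|^2 - |x_{k+1} - z|^2
       >= |w_k - y_k|^2 - lam_k^2 |G(w'_k) - G(y_k)|^2 + 2 lam_k <G(y_k), y_k - z>.
   G is L_k-Lipschitz, and |w'_k - y_k| <= |w_k - y_k| because y_k lies in X,
   a subset of Omega, and w'_k = P_Omega(w_k); this bounds the middle term.  G is
   also (eta_k mu)-strongly monotone, which bounds <G(y_k), y_k - z> from below
   by <G(z), y_k - z> + eta_k mu |y_k - z|^2. *)

Section EuclideanNorm.
Variables (R : realType) (n : nat).
Implicit Types (u v w : 'rV[R]_n) (a : R).

Lemma vdotC u v : vdot u v = vdot v u.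
Proof. by apply: eq_bigr => i _; rewrite mulrC. Qed.

Lemma vdotDl u v w : vdot (u + v) w = vdot u w + vdot v w.
Proof. by rewrite /vdot -big_split; apply: eq_bigr => i _; rewrite mxE mulrDl. Qed.

Lemma vdotZl a u v : vdot (a *: u) v = a * vdot u v.
Proof. by rewrite /vdot mulr_sumr; apply: eq_bigr => i _; rewrite mxE mulrA. Qed.

Lemma vdotNl u v : vdot (- u) v = - vdot u v.
Proof. by rewrite -scaleN1r vdotZl mulN1r. Qed.

Lemma vdotBl u v w : vdot (u - v) w = vdot u w - vdot v w.
Proof. by rewrite vdotDl vdotNl. Qed.

Lemma vdotDr u v w : vdot u (v + w) = vdot u v + vdot u w.
Proof. by rewrite vdotC vdotDl !(vdotC u). Qed.

Lemma vdotZr a u v : vdot u (a *: v) = a * vdot u v.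
Proof. by rewrite vdotC vdotZl vdotC. Qed.

Lemma vdotNr u v : vdot u (- v) = - vdot u v.
Proof. by rewrite vdotC vdotNl vdotC. Qed.

Lemma vdot0l v : vdot 0 v = 0.
Proof. by rewrite -(scale0r (0 : 'rV_n)) vdotZl mul0r. Qed.

Lemma vdotvv_ge0 u : 0 <= vdot u u.
Proof. by apply: sumr_ge0 => i _; rewrite -expr2 sqr_ge0. Qed.

Lemma vnorm_ge0 u : 0 <= vnorm u.
Proof. exact: sqrtr_ge0. Qed.

Lemma vnorm2 u : vnorm u ^+ 2 = vdot u u.
Proof. by rewrite sqr_sqrtr // vdotvv_ge0. Qed.

Lemma ler_vnorm_sqr u v : (vnorm u <= vnorm v) = (vnorm u ^+ 2 <= vnorm v ^+ 2).
Proof. by rewrite ler_sqr ?nnegrE ?vnorm_ge0. Qed.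

Lemma vnormD2 u v :
  vnorm (u + v) ^+ 2 = vnorm u ^+ 2 + 2 * vdot u v + vnorm v ^+ 2.
Proof. by rewrite !vnorm2 vdotDl !vdotDr (vdotC v u); lra. Qed.

Lemma vnormZ a u : vnorm (a *: u) = `|a| * vnorm u.
Proof. by rewrite /vnorm vdotZl vdotZr mulrA -expr2 sqrtrM ?sqr_ge0 // sqrtr_sqr. Qed.

Lemma vnormN u : vnorm (- u) = vnorm u.
Proof. by rewrite -scaleN1r vnormZ normrN1 mul1r. Qed.

Lemma vnormB2 u v :
  vnorm (u - v) ^+ 2 = vnorm u ^+ 2 - 2 * vdot u v + vnorm v ^+ 2.
Proof. by rewrite vnormD2 vdotNr vnormN mulrN. Qed.

Lemma vnorm_eq0 u : vnorm u = 0 -> u = 0.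
Proof.
move=> /eqP; rewrite sqrtr_eq0 => uu_le0.
have uu0 : vdot u u = 0 by apply/eqP; rewrite eq_le uu_le0 vdotvv_ge0.
apply/rowP => i; rewrite mxE; apply/eqP; rewrite -sqrf_eq0 expr2; apply/eqP.
by apply: (psumr_eq0P _ uu0) => // j _; rewrite -expr2 sqr_ge0.
Qed.

Lemma vdot_young u v : 2 * vdot u v <= vnorm u ^+ 2 + vnorm v ^+ 2.
Proof. by have := sqr_ge0 (vnorm (u - v)); rewrite vnormB2; lra. Qed.

Lemma vdot_le_vnorm u v : vdot u v <= vnorm u * vnorm v.
Proof.
have [u0 | u_neq0] := eqVneq (vnorm u) 0.
  by rewrite (vnorm_eq0 u0) vdot0l mulr_ge0 ?vnorm_ge0.
have [v0 | v_neq0] := eqVneq (vnorm v) 0.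
  by rewrite (vnorm_eq0 v0) vdotC vdot0l mulr_ge0 ?vnorm_ge0.
have uv_gt0 : 0 < vnorm u * vnorm v.
  by apply: mulr_gt0; rewrite lt_def ?u_neq0 ?v_neq0 vnorm_ge0.
have := vdot_young (vnorm v *: u) (vnorm u *: v).
rewrite vdotZl vdotZr !vnormZ !ger0_norm ?vnorm_ge0 // => young.
by rewrite -(ler_pM2l uv_gt0); lra.
Qed.

Lemma ler_vnormD u v : vnorm (u + v) <= vnorm u + vnorm v.
Proof.
rewrite -ler_sqr ?nnegrE ?addr_ge0 ?vnorm_ge0 // vnormD2.
by have := vdot_le_vnorm u v; lra.
Qed.

End EuclideanNorm.

Section Projection.
Variables (R : realType) (n : nat) (C : set 'rV[R]_n) (P : 'rV[R]_n -> 'rV[R]_n).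
Hypotheses (convC : vconvex_set C) (projP : is_proj_onto C P).

Lemma proj_mem d : C (P d).
Proof. by case: (projP d). Qed.

Lemma proj_vdot_le0 d u : C u -> vdot (d - P d) (u - P d) <= 0.
Proof.
move=> Cu; set p := P d; set c := vdot (d - p) (u - p).
set N := vnorm (u - p) ^+ 2.
rewrite leNgt; apply/negP => c_gt0.
have N_ge0 : 0 <= N by rewrite sqr_ge0.
(* If c > 0, the point of the segment [p, u] at parameter t is closer to d than p. *)
set t := c / (c + N).
have t_gt0 : 0 < t by rewrite divr_gt0 // ltr_wpDr.
have t_le1 : t <= 1 by rewrite ler_pdivrMr ?mul1r ?lerDl // ltr_wpDr.
have tcN : t * (c + N) = c by rewrite mulfVK // gt_eqF // ltr_wpDr.
have Cpu : C ((1 - t) *: p + t *: u).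
  by apply: convC => //; [exact: proj_mem | rewrite (ltW t_gt0) t_le1].
have := (projP d).2 _ Cpu.
have -> : d - ((1 - t) *: p + t *: u) = (d - p) - t *: (u - p).
  by apply/rowP => i; rewrite !mxE; ring.
rewrite -/p ler_vnorm_sqr (vnormB2 (d - p)) vdotZr vnormZ exprMn (ger0_norm (ltW t_gt0)).
rewrite -/c -/N => dist.
have : t * (2 * c) <= t * (t * N) by lra.
rewrite ler_pM2l // => c2_le.
by have := mulr_gt0 t_gt0 c_gt0; move: tcN; rewrite mulrDr; lra.
Qed.

Lemma proj_vnorm_le d u : C u -> vnorm (P d - u) <= vnorm (d - u).
Proof.
move=> /(proj_vdot_le0 d) vi.
have -> : d - u = (d - P d) - (u - P d) by rewrite opprB addrA subrK.
rewrite -vnormN opprB ler_vnorm_sqr vnormB2.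
by have := sqr_ge0 (vnorm (d - P d)); lra.
Qed.

Lemma extragradient_step (G : 'rV[R]_n -> 'rV[R]_n) (lam : R) d v y x z :
  y = P (d - lam *: G v) -> x = P (d - lam *: G y) -> C z ->
  vnorm (d - y) ^+ 2 - lam ^+ 2 * vnorm (G v - G y) ^+ 2
    + 2 * lam * vdot (G y) (y - z)
  <= vnorm (d - z) ^+ 2 - vnorm (x - z) ^+ 2.
Proof.
move=> def_y def_x Cz.
have Cx : C x by rewrite def_x; exact: proj_mem.
have vi_x : lam * vdot (G y) (x - z) <= vdot (d - x) (x - z).
  have := proj_vdot_le0 (d - lam *: G y) Cz.
  by rewrite -def_x addrAC -(opprB x z) vdotNr vdotBl vdotZl; lra.
have vi_y : vdot (d - y) (x - y) <= lam * vdot (G v) (x - y).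
  have := proj_vdot_le0 (d - lam *: G v) Cx.
  by rewrite -def_y addrAC vdotBl vdotZl; lra.
have young := vdot_young (lam *: (G v - G y)) (x - y).
rewrite vdotZl vdotBl vnormZ exprMn (real_normK (num_real lam)) in young.
have dx : d - x = (d - y) - (x - y) by rewrite opprB addrA subrK.
have xz : x - z = (x - y) + (y - z) by rewrite addrA subrK.
have -> : d - z = (d - x) + (x - z) by rewrite addrA subrK.
rewrite dx xz in vi_x *.
move: vi_x vi_y young; move: (d - y) (x - y) (y - z) (G v - G y) => a b c e.
rewrite (vnormD2 (a - b)) vnormB2 vdotBl !vdotDr -vnorm2.
lra.
Qed.

End Projection.

Section RegularizedOperator.
Variables (R : realType) (n : nat) (DF DH : set 'rV[R]_n).
Variables (F H : 'rV[R]_n -> 'rV[R]_n) (e : R).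
Hypothesis e_ge0 : 0 <= e.

Let G u := F u + e *: H u.

Let GB u v : G u - G v = (F u - F v) + e *: (H u - H v).
Proof. by rewrite /G scalerBr opprD addrACA. Qed.

Lemma op_lipschitz_onDZ LF LH :
  op_lipschitz_on DF F LF -> op_lipschitz_on DH H LH ->
  op_lipschitz_on (DF `&` DH) G (LF + e * LH).
Proof.
move=> lipF lipH u v [DFu DHu] [DFv DHv].
rewrite GB (le_trans (ler_vnormD _ _)) // vnormZ ger0_norm //.
have := lipF _ _ DFu DFv; have := ler_wpM2l e_ge0 (lipH _ _ DHu DHv).
by lra.
Qed.

Lemma op_strongly_monotone_onDZ mu :
  op_monotone_on DF F -> op_strongly_monotone_on DH H mu ->
  op_strongly_monotone_on (DF `&` DH) G (e * mu).
Proof.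
move=> monF smonH u v [DFu DHu] [DFv DHv].
rewrite GB vdotDl vdotZl -mulrA.
have := monF _ _ DFu DFv; have := ler_wpM2l e_ge0 (smonH _ _ DHu DHv).
by lra.
Qed.

End RegularizedOperator.

Theorem proposition4p2 (R : realType) (n : nat)
  (F H : 'rV[R]_n -> 'rV[R]_n) (DomF DomH X Omega : set 'rV[R]_n)
  (LF LH mu : R) (PX PO : 'rV[R]_n -> 'rV[R]_n)
  (alpha lam eta : nat -> R) (x y w w' : nat -> 'rV[R]_n) :
  op_monotone_on DomF F -> op_monotone_on DomH H ->
  0 < LF -> 0 < LH -> op_lipschitz_on DomF F LF -> op_lipschitz_on DomH H LH ->
  0 < mu -> op_strongly_monotone_on DomH H mu ->
  X !=set0 -> compact X -> vconvex_set X ->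
  Omega !=set0 -> closed Omega -> vconvex_set Omega ->
  X `<=` Omega -> Omega `<=` DomF `&` DomH ->
  is_proj_onto X PX -> is_proj_onto Omega PO ->
  VIsol F X !=set0 ->
  (forall k, 0 <= alpha k) -> (forall k, 0 < lam k) -> (forall k, 0 < eta k) ->
  X (x 0%N) ->
  (* x_{-1} = x_0 is encoded by x (k.-1) with 0.-1 = 0 *)
  (forall k, w k = x k + alpha k *: (x k - x k.-1)) ->
  (forall k, w' k = PO (w k)) ->
  (forall k, y k = PX (w k - lam k *: (F (w' k) + eta k *: H (w' k)))) ->
  (forall k, x k.+1 = PX (w k - lam k *: (F (y k) + eta k *: H (y k)))) ->
  forall (z : 'rV[R]_n) (k : nat), X z ->
    let Lk := LF + eta k * LH in
    vnorm (w k - z) ^+ 2 - vnorm (x k.+1 - z) ^+ 2 >=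
      (1 - lam k ^+ 2 * Lk ^+ 2) * vnorm (w k - y k) ^+ 2
      + 2 * lam k * vdot (F z) (y k - z)
      + 2 * lam k * eta k * vdot (H z) (y k - z)
      + 2 * lam k * eta k * mu * vnorm (y k - z) ^+ 2.
Proof.
move=> monF _ LF_gt0 LH_gt0 lipF lipH _ smonH _ _ convX _ _ convO sXO sOD projX projO _
  _ lam_gt0 eta_gt0 _ _ def_w' def_y def_x z k Xz /=.
set Lk := LF + eta k * LH; set G := fun u => F u + eta k *: H u.
have eta_ge0 := ltW (eta_gt0 k).
have Lk_ge0 : 0 <= Lk by apply/ltW/addr_gt0 => //; exact: mulr_gt0.
have Xy : X (y k) by rewrite def_y; exact: proj_mem projX _.
have Ow' : Omega (w' k) by rewrite def_w'; exact: proj_mem projO _.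
have step := extragradient_step (G := G) convX projX (def_y k) (def_x k) Xz.
have lipG : vnorm (G (w' k) - G (y k)) ^+ 2 <= Lk ^+ 2 * vnorm (w k - y k) ^+ 2.
  rewrite -exprMn ler_sqr ?nnegrE ?vnorm_ge0 ?(mulr_ge0 Lk_ge0 (vnorm_ge0 _)) //.
  apply: le_trans (op_lipschitz_onDZ eta_ge0 lipF lipH (sOD _ Ow') (sOD _ (sXO _ Xy))) _.
  by rewrite ler_wpM2l // def_w' (proj_vnorm_le convO projO _ (sXO _ Xy)).
have smonG : eta k * mu * vnorm (y k - z) ^+ 2 <= vdot (G (y k)) (y k - z)
    - (vdot (F z) (y k - z) + eta k * vdot (H z) (y k - z)).
  rewrite -vdotZl -vdotDl -vdotBl.
  by apply: (op_strongly_monotone_onDZ eta_ge0 monF smonH); apply/sOD/sXO.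
have := ler_wpM2l (sqr_ge0 (lam k)) lipG.
have := ler_wpM2l (mulr_ge0 (ler0n _ 2) (ltW (lam_gt0 k))) smonG.
by lra.
Qed.
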